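(* Let $t>0$, $t'\in\{t,t+1\}$ (so $t'\ge t$), $N-t-t'>0$, and assume $\boldsymbol{Q}_{t'}$ and $\boldsymbol{M}_t$ have full column rank. Let $$\boldsymbol{\Gamma}_{t,t'}=\boldsymbol{M}_t^\dagger-\boldsymbol{M}_t^\dagger\boldsymbol{B}_{t'}(\boldsymbol{B}_{t'}^{\mathrm{H}}\boldsymbol{P}^\perp_{\boldsymbol{M}_t}\boldsymbol{B}_{t'})^{-1}\boldsymbol{B}_{t'}^{\mathrm{H}}\boldsymbol{P}^\perp_{\boldsymbol{M}_t},\qquad \boldsymbol{\Delta}_{t,t'}=\boldsymbol{Q}_{t'}^\dagger-\boldsymbol{Q}_{t'}^\dagger\boldsymbol{H}_t(\boldsymbol{H}_t^{\mathrm{H}}\boldsymbol{P}^\perp_{\boldsymbol{Q}_{t'}}\boldsymbol{H}_t)^{-1}\boldsymbol{H}_t^{\mathrm{H}}\boldsymbol{P}^\perp_{\boldsymbol{Q}_{t'}},$$ $\boldsymbol{\epsilon}_{1,t}=\boldsymbol{\Gamma}_{t,t}^{\mathrm{H}}\boldsymbol{H}_t^{\mathrm{H}}\boldsymbol{q}_t^\perp$ and $\boldsymbol{\epsilon}_{2,t}=\boldsymbol{\Delta}_{t,t+1}^{\mathrm{H}}\boldsymbol{B}_{t+1}^{\mathrm{H}}\boldsymbol{m}_t^\perp$. Then for all $\tau<t'$: $\bar{\boldsymbol{V}}_{t,t'}^{\mathrm{H}}\boldsymbol{q}_\tau=\boldsymbol{b}_\tau$; $\bar{\boldsymbol{V}}_{t,t}^{\mathrm{H}}\boldsymbol{q}_t=\boldsymbol{B}_t\boldsymbol{\beta}_t+\boldsymbol{\epsilon}_{1,t}$;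 $\bar{\boldsymbol{V}}_{t,t+1}\boldsymbol{m}_t=\boldsymbol{H}_t\boldsymbol{\alpha}_t+\boldsymbol{\epsilon}_{2,t}$; $$\boldsymbol{\Phi}^\perp_{\boldsymbol{M}_t}\boldsymbol{P}^\perp_{\boldsymbol{V}_{01}^{t,t'}}(\boldsymbol{\Phi}^\perp_{\boldsymbol{M}_t})^{\mathrm{H}}=\boldsymbol{P}^\perp_{\boldsymbol{M}_t}-\boldsymbol{P}^\parallel_{\boldsymbol{P}^\perp_{\boldsymbol{M}_t}\boldsymbol{B}_{t'}},\qquad \boldsymbol{\Phi}^\perp_{\boldsymbol{Q}_{t'}}\boldsymbol{P}^\perp_{\boldsymbol{V}_{10}^{t,t'}}(\boldsymbol{\Phi}^\perp_{\boldsymbol{Q}_{t'}})^{\mathrm{H}}=\boldsymbol{P}^\perp_{\boldsymbol{Q}_{t'}}-\boldsymbol{P}^\parallel_{\boldsymbol{P}^\perp_{\boldsymbol{Q}_{t'}}\boldsymbol{H}_t}.$$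
   Context: Setting: $\boldsymbol{V}$ is an $N\times N$ unitary matrix from the SVD $\boldsymbol{A}=\boldsymbol{U}(\boldsymbol{\Sigma},\boldsymbol{O})\boldsymbol{V}^{\mathrm{H}}$ of the measurement matrix in $\boldsymbol{y}=\boldsymbol{A}\boldsymbol{x}+\boldsymbol{w}$ ($\boldsymbol{A}\in\mathbb{C}^{M\times N}$). Error recursion of the EP algorithm: $\boldsymbol{q}_0=\boldsymbol{x}$; $\boldsymbol{b}_t=\boldsymbol{V}^{\mathrm{H}}\boldsymbol{q}_t$; $\boldsymbol{m}_t=\boldsymbol{b}_t-\gamma_t\tilde{\boldsymbol{W}}_t\{(\boldsymbol{\Sigma},\boldsymbol{O})\boldsymbol{b}_t+\boldsymbol{U}^{\mathrm{H}}\boldsymbol{w}\}$ with $\tilde{\boldsymbol{W}}_t=(\boldsymbol{\Sigma},\boldsymbol{O})^{\mathrm{H}}(\sigma^2\boldsymbol{I}_M+v^t_{\mathrm{B}\to\mathrm{A}}\boldsymbol{\Sigma}^2)^{-1}$; $\boldsymbol{h}_t=\boldsymbol{V}\boldsymbol{m}_t$; $\boldsymbol{q}_{t+1}=\boldsymbol{q}_0-\eta_t(\boldsymbol{q}_0-\boldsymbol{h}_t)$, where $\gamma_t,v^t_{\mathrm{B}\to\mathrm{A}}$ are scalars and $\eta_t$ a scalar function applied componentwise, as produced by the EP algorithm. (In particular $\boldsymbol{B}_{t'}=\boldsymbol{V}^{\mathrm{H}}\boldsymbol{Q}_{t'}$ and $\boldsymbol{H}_t=\boldsymbol{V}\boldsymbol{M}_t$.)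 $\boldsymbol{Q}_t=(\boldsymbol{q}_0,\ldots,\boldsymbol{q}_{t-1})$, similarly $\boldsymbol{B}_t,\boldsymbol{M}_t,\boldsymbol{H}_t\in\mathbb{C}^{N\times t}$. Notation: for full-column-rank $\boldsymbol{X}$, $\boldsymbol{X}^\dagger=(\boldsymbol{X}^{\mathrm{H}}\boldsymbol{X})^{-1}\boldsymbol{X}^{\mathrm{H}}$, $\boldsymbol{P}^\parallel_{\boldsymbol{X}}=\boldsymbol{X}\boldsymbol{X}^\dagger$, $\boldsymbol{P}^\perp_{\boldsymbol{X}}=\boldsymbol{I}-\boldsymbol{P}^\parallel_{\boldsymbol{X}}$; for full-row-rank wide $\boldsymbol{X}$ ($m\times n$, $m\le n$), $\boldsymbol{X}^\dagger=\boldsymbol{X}^{\mathrm{H}}(\boldsymbol{X}\boldsymbol{X}^{\mathrm{H}})^{-1}$, $\boldsymbol{P}^\perp_{\boldsymbol{X}}=\boldsymbol{I}_n-\boldsymbol{X}^\dagger\boldsymbol{X}$. $\boldsymbol{q}_t^\perp=\boldsymbol{P}^\perp_{\boldsymbol{Q}_t}\boldsymbol{q}_t$, $\boldsymbol{\beta}_t=\boldsymbol{Q}_t^\dagger\boldsymbol{q}_t$, $\boldsymbol{m}_t^\perp=\boldsymbol{P}^\perp_{\boldsymbol{M}_t}\boldsymbol{m}_t$, $\boldsymbol{\alpha}_t=\boldsymbol{M}_t^\dagger\boldsymbol{m}_t$. SVD conventions: tall $\boldsymbol{X}\in\mathbb{C}^{m\times n}$ ($m>n$): $\boldsymbol{X}=\boldsymbol{\Phi}_{\boldsymbol{X}}\binom{\boldsymbol{\Sigma}_{\boldsymbol{X}}}{\boldsymbol{O}}\boldsymbol{\Psi}^{\mathrm{H}}_{\boldsymbol{X}}$,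 $\boldsymbol{\Phi}_{\boldsymbol{X}}=(\boldsymbol{\Phi}^\parallel_{\boldsymbol{X}},\boldsymbol{\Phi}^\perp_{\boldsymbol{X}})$ unitary with $\boldsymbol{\Phi}^\parallel_{\boldsymbol{X}}$ the first $n$ columns; wide ($m\le n$): $\boldsymbol{X}=\boldsymbol{\Phi}_{\boldsymbol{X}}(\boldsymbol{\Sigma}_{\boldsymbol{X}},\boldsymbol{O})\boldsymbol{\Psi}^{\mathrm{H}}_{\boldsymbol{X}}$, $\boldsymbol{\Psi}_{\boldsymbol{X}}=(\boldsymbol{\Psi}^\parallel_{\boldsymbol{X}},\boldsymbol{\Psi}^\perp_{\boldsymbol{X}})$ with $\boldsymbol{\Psi}^\parallel_{\boldsymbol{X}}$ the first $m$ columns. Define $\boldsymbol{V}_{00}^{t,t'}=(\boldsymbol{Q}_{t'}^{\dagger}\boldsymbol{\Phi}^{\parallel}_{\boldsymbol{Q}_{t'}})^{\mathrm{H}}\boldsymbol{B}_{t'}^{\mathrm{H}}\boldsymbol{\Phi}^{\parallel}_{\boldsymbol{M}_t}=(\boldsymbol{\Phi}^{\parallel}_{\boldsymbol{Q}_{t'}})^{\mathrm{H}}\boldsymbol{H}_t\boldsymbol{M}_t^{\dagger}\boldsymbol{\Phi}^{\parallel}_{\boldsymbol{M}_t}$, $\boldsymbol{V}_{01}^{t,t'}=(\boldsymbol{Q}_{t'}^{\dagger}\boldsymbol{\Phi}^{\parallel}_{\boldsymbol{Q}_{t'}})^{\mathrm{H}}\boldsymbol{B}_{t'}^{\mathrm{H}}\boldsymbol{\Phi}^{\perp}_{\boldsymbol{M}_t}\in\mathbb{C}^{t'\times(N-t)}$,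 $\boldsymbol{V}_{10}^{t,t'}=(\boldsymbol{\Phi}^{\perp}_{\boldsymbol{Q}_{t'}})^{\mathrm{H}}\boldsymbol{H}_t\boldsymbol{M}_t^{\dagger}\boldsymbol{\Phi}^{\parallel}_{\boldsymbol{M}_t}\in\mathbb{C}^{(N-t')\times t}$, $\bar{\boldsymbol{V}}_{11}^{t,t'}=-\boldsymbol{V}_{10}^{t,t'}[(\boldsymbol{V}_{01}^{t,t'})^\dagger\boldsymbol{V}_{00}^{t,t'}]^{\mathrm{H}}$ and $\bar{\boldsymbol{V}}_{t,t'}=\boldsymbol{\Phi}_{\boldsymbol{Q}_{t'}}\begin{pmatrix}\boldsymbol{V}_{00}^{t,t'}&\boldsymbol{V}_{01}^{t,t'}\\ \boldsymbol{V}_{10}^{t,t'}&\bar{\boldsymbol{V}}_{11}^{t,t'}\end{pmatrix}\boldsymbol{\Phi}_{\boldsymbol{M}_t}^{\mathrm{H}}$. *)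

From HB Require Import structures.
From mathcomp Require Import all_boot all_order all_algebra.
Set Implicit Arguments. Unset Strict Implicit. Unset Printing Implicit Defensive.
Import Order.TTheory GRing.Theory Num.Theory.
Local Open Scope ring_scope.
Local Open Scope sesquilinear_scope.

Section Defs.
Context {C : numClosedFieldType}.

Definition tpinv {m n} (X : 'M[C]_(m, n)) : 'M[C]_(n, m) :=
  invmx (X ^t* *m X) *m X ^t*.
Definition wpinv {m n} (X : 'M[C]_(m, n)) : 'M[C]_(n, m) :=
  X ^t* *m invmx (X *m X ^t*).
Definition Ppar {m n} (X : 'M[C]_(m, n)) : 'M[C]_m := X *m tpinv X.
Definition Pperp {m n} (X : 'M[C]_(m, n)) : 'M[C]_m := 1%:M - Ppar X.
Definition wPperp {m n} (X : 'M[C]_(m, n)) : 'M[C]_n := 1%:M - wpinv X *m X.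

Definition colmat {N} (k : nat) (f : nat -> 'cV[C]_N) : 'M[C]_(N, k) :=
  \matrix_(i < N, j < k) f j i 0.

Definition sigO {Md N} (s : 'rV[C]_Md) : 'M[C]_(Md, N) :=
  \matrix_(i < Md, j < N) if (i : nat) == j then s 0 i else 0.

Definition meas_svd {Md N} (A : 'M[C]_(Md, N)) (U : 'M[C]_Md) (s : 'rV[C]_Md)
    (V : 'M[C]_N) : Prop :=
  [/\ (Md <= N)%N, U \is unitarymx, V \is unitarymx,
      (forall i, 0 <= s 0 i) & A = U *m sigO s *m V ^t*].

Definition tall_svd {m n} (X : 'M[C]_(m, n)) (Phip : 'M[C]_(m, n))
    (Phio : 'M[C]_(m, m - n)) (s : 'rV[C]_n) (Psi : 'M[C]_n) : Prop :=
  [/\ (n < m)%N,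
      row_mx Phip Phio \is unitarymx /\ (row_mx Phip Phio) ^t* \is unitarymx,
      Psi \is unitarymx,
      (forall i, 0 <= s 0 i) &
      X = row_mx Phip Phio *m col_mx (diag_mx s) 0 *m Psi ^t*].

Definition EP_recursion {Md N} (U : 'M[C]_Md) (s : 'rV[C]_Md) (V : 'M[C]_N)
    (x : 'cV[C]_N) (w : 'cV[C]_Md) (sigma2 : C) (gam vBA : nat -> C)
    (eta : nat -> C -> C) (q m : nat -> 'cV[C]_N) : Prop :=
  let Wt k : 'M[C]_(N, Md) :=
    (sigO s) ^t* *m invmx (sigma2%:M + vBA k *: (diag_mx s) ^+ 2) in
  [/\ q 0%N = x,
      (forall k, m k = V ^t* *m q k
                      - gam k *: (Wt k *m (sigO s *m (V ^t* *m q k) + U ^t* *m w))) &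
      forall k, q k.+1 = q 0%N - map_mx (eta k) (q 0%N - V *m m k)].

(* Gamma_{t,t'} (with X = M_t, Y = B_t') and Delta_{t,t'} (X = Q_t', Y = H_t) *)
Definition Gamma {N k l} (X : 'M[C]_(N, k)) (Y : 'M[C]_(N, l)) : 'M[C]_(k, N) :=
  tpinv X - tpinv X *m Y *m invmx (Y ^t* *m Pperp X *m Y) *m Y ^t* *m Pperp X.
Definition Delta {N k l} (X : 'M[C]_(N, k)) (Y : 'M[C]_(N, l)) : 'M[C]_(k, N) :=
  tpinv X - tpinv X *m Y *m invmx (Y ^t* *m Pperp X *m Y) *m Y ^t* *m Pperp X.

Definition V00 {N t t'} (Q B : 'M[C]_(N, t')) (PQp : 'M[C]_(N, t'))
    (PMp : 'M[C]_(N, t)) : 'M[C]_(t', t) :=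
  (tpinv Q *m PQp) ^t* *m B ^t* *m PMp.
Definition V01 {N t t'} (Q B : 'M[C]_(N, t')) (PQp : 'M[C]_(N, t'))
    (PMo : 'M[C]_(N, N - t)) : 'M[C]_(t', N - t) :=
  (tpinv Q *m PQp) ^t* *m B ^t* *m PMo.
Definition V10 {N t t'} (Mt H : 'M[C]_(N, t)) (PQo : 'M[C]_(N, N - t'))
    (PMp : 'M[C]_(N, t)) : 'M[C]_(N - t', t) :=
  PQo ^t* *m H *m tpinv Mt *m PMp.
Definition V11bar {N t t'} (Q B : 'M[C]_(N, t')) (Mt H : 'M[C]_(N, t))
    (PQp : 'M[C]_(N, t')) (PQo : 'M[C]_(N, N - t'))
    (PMp : 'M[C]_(N, t)) (PMo : 'M[C]_(N, N - t)) : 'M[C]_(N - t', N - t) :=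
  - (V10 Mt H PQo PMp *m (wpinv (V01 Q B PQp PMo) *m V00 Q B PQp PMp) ^t*).
Definition Vbar {N t t'} (Q B : 'M[C]_(N, t')) (Mt H : 'M[C]_(N, t))
    (PQp : 'M[C]_(N, t')) (PQo : 'M[C]_(N, N - t'))
    (PMp : 'M[C]_(N, t)) (PMo : 'M[C]_(N, N - t)) : 'M[C]_N :=
  row_mx PQp PQo *m
    block_mx (V00 Q B PQp PMp) (V01 Q B PQp PMo)
             (V10 Mt H PQo PMp) (V11bar Q B Mt H PQp PQo PMp PMo)
  *m (row_mx PMp PMo) ^t*.

End Defs.

From HB Require Import structures.
From mathcomp Require Import all_boot all_order all_algebra.
Import Order.TTheory GRing.Theory Num.Theory.
Local Open Scope ring_scope.
Local Open Scope sesquilinear_scope.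

(* Write Q_t' = Phi^par_Q D and M_t = Phi^par_M E with D, E invertible, and let
   W = Phi_Q^H V Phi_M be V expressed in the bases of the two SVDs.  Then V00,
   V01 and V10 are the corresponding blocks of W, and Vbar = Phi_Q Wbar Phi_M^H
   where Wbar differs from W only in its (1,1) block
   Wbar11 = - W10 W00^H (W01 W01^H)^-1 W01.  Hence Vbar agrees with V on the
   range of M_t, and Vbar^H with V^H on the range of Q_t'; this gives the first
   claim and the B_t beta_t, H_t alpha_t parts of the next two.  The error terms
   live on the complementary ranges, where (Phi^perp_Q)^H H_t Gamma and
   (Phi^perp_M)^H B_t' Delta are explicit in the blocks of W; they agree with
   Wbar by the push-through identity (W10^H W10)^-1 W00^H = W00^H (W01 W01^H)^-1,
   which follows from the unitarity of W.  Finally P^perp_M B_t' = Phi^perp_M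
   W01^H D and P^perp_Q H_t = Phi^perp_Q W10 E, so both projection identities
   reduce to conjugating P^perp of a tall matrix by an isometry. *)

Section Adjoint.
Context {C : numClosedFieldType}.

Lemma adjmxM {m n p} (A : 'M[C]_(m, n)) (B : 'M[C]_(n, p)) :
  (A *m B)^t* = B^t* *m A^t*.
Proof. by rewrite trmx_mul map_mxM. Qed.

Lemma adjmxD {m n} (A B : 'M[C]_(m, n)) : (A + B)^t* = A^t* + B^t*.
Proof. by rewrite linearD map_mxD. Qed.

Lemma adjmxN {m n} (A : 'M[C]_(m, n)) : (- A)^t* = - A^t*.
Proof. by rewrite linearN map_mxN. Qed.

Lemma adjmxB {m n} (A B : 'M[C]_(m, n)) : (A - B)^t* = A^t* - B^t*.
Proof. by rewrite adjmxD adjmxN. Qed.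

Lemma adjmx1 {n} : (1%:M : 'M[C]_n)^t* = 1%:M.
Proof. by rewrite tr_scalar_mx map_scalar_mx rmorph1. Qed.

Lemma adjmx_inv {n} (A : 'M[C]_n) : (invmx A)^t* = invmx (A^t*).
Proof. by rewrite trmx_inv map_invmx. Qed.

Lemma unitmx_adj {n} (A : 'M[C]_n) : (A^t* \in unitmx) = (A \in unitmx).
Proof. by rewrite map_unitmx unitmx_tr. Qed.

Lemma mxrank_adj {m n} (A : 'M[C]_(m, n)) : \rank (A^t*) = \rank A.
Proof. by rewrite mxrank_map mxrank_tr. Qed.

Lemma adjmx_row_mx {m n1 n2} (A : 'M[C]_(m, n1)) (B : 'M[C]_(m, n2)) :
  (row_mx A B)^t* = col_mx (A^t*) (B^t*).
Proof. by rewrite tr_row_mx map_col_mx. Qed.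

Lemma invmxM {n} (A B : 'M[C]_n) :
  A \in unitmx -> B \in unitmx -> invmx (A *m B) = invmx B *m invmx A.
Proof.
move=> uA uB; apply: (@row_full_inj _ _ _ _ (A *m B)).
  by rewrite row_full_unit unitmx_mul uA uB.
by rewrite mulmxV ?unitmx_mul ?uA // mulmxA mulmxK // mulmxV.
Qed.

Lemma mulmx_cancelr {n k} {A : 'M[C]_(n, k)} {B : 'M[C]_(k, n)} :
  A *m B = 1%:M -> forall m (X : 'M[C]_(m, n)), X *m A *m B = X.
Proof. by move=> AB1 m X; rewrite -mulmxA AB1 mulmx1. Qed.

Lemma unitmx_gram {n k} (Z : 'M[C]_(n, k)) : \rank Z = k -> Z^t* *m Z \in unitmx.
Proof.
move=> rkZ; rewrite -row_free_unit -kermx_eq0; apply/eqP/row_matrixP => i.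
rewrite row0; set u := row i _.
have uZZ : u *m (Z^t* *m Z) = 0 by rewrite /u -row_mul mulmx_ker row0.
have uZ0 : u *m Z^t* = 0.
  apply/eqP; rewrite -(dnorm_eq0 (@dotmx C n)) /= dotmxE.
  by rewrite adjmxM trmxCK mulmxA -(mulmxA u) uZZ mul0mx mxE.
have Zt_free : row_free (Z^t*) by rewrite /row_free mxrank_adj rkZ.
by apply: (row_free_inj Zt_free); rewrite mul0mx.
Qed.

Lemma mxrank_isometry {m n p} (P : 'M[C]_(m, n)) (Y : 'M[C]_(n, p)) :
  P^t* *m P = 1%:M -> \rank (P *m Y) = \rank Y.
Proof.
move=> PtP; apply/eqP; rewrite eqn_leq mxrankM_maxr /=.
by rewrite -{1}(mul1mx Y) -PtP -mulmxA mxrankM_maxr.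
Qed.

Lemma invmx_congruence {n} {D S : 'M[C]_n} : D \in unitmx -> S \in unitmx ->
  invmx (D^t* *m S *m D) = invmx D *m invmx S *m invmx (D^t*).
Proof.
move=> uD uS; have uDt : D^t* \in unitmx by rewrite unitmx_adj.
by rewrite invmxM ?unitmx_mul ?uDt // invmxM // mulmxA.
Qed.

End Adjoint.

Section PseudoInverse.
Context {C : numClosedFieldType}.

Lemma tpinv_mulmx_unit {m n} (X : 'M[C]_(m, n)) (D : 'M[C]_n) :
  X^t* *m X \in unitmx -> D \in unitmx -> tpinv (X *m D) = invmx D *m tpinv X.
Proof.
move=> uXX uD; rewrite /tpinv adjmxM !mulmxA.
have -> : D^t* *m X^t* *m X *m D = D^t* *m (X^t* *m X) *m D by rewrite !mulmxA.
by rewrite (invmx_congruence uD uXX) mulmxKV ?unitmx_adj.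
Qed.

Lemma tpinv_isometry {m n} (P : 'M[C]_(m, n)) : P^t* *m P = 1%:M -> tpinv P = P^t*.
Proof. by move=> PtP; rewrite /tpinv PtP invmx1 mul1mx. Qed.

Lemma tpinv_svd {m n} (P : 'M[C]_(m, n)) (D : 'M[C]_n) :
  P^t* *m P = 1%:M -> D \in unitmx -> tpinv (P *m D) = invmx D *m P^t*.
Proof.
by move=> PtP uD; rewrite tpinv_mulmx_unit ?PtP ?unitmx1 ?tpinv_isometry.
Qed.

Lemma Ppar_mulmx_unit {m n} (X : 'M[C]_(m, n)) (D : 'M[C]_n) :
  X^t* *m X \in unitmx -> D \in unitmx -> Ppar (X *m D) = Ppar X.
Proof.
by move=> uXX uD; rewrite /Ppar tpinv_mulmx_unit // -mulmxA (mulmxA D) mulmxV ?mul1mx.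
Qed.

Lemma Ppar_isometry {m n p} (P : 'M[C]_(m, n)) (Y : 'M[C]_(n, p)) :
  P^t* *m P = 1%:M -> Ppar (P *m Y) = P *m Ppar Y *m P^t*.
Proof.
by move=> PtP; rewrite /Ppar /tpinv !adjmxM !mulmxA (mulmx_cancelr PtP).
Qed.

Lemma Pperp_svd {m n} (P1 : 'M[C]_(m, n)) (P2 : 'M[C]_(m, m - n)) (D : 'M[C]_n) :
  P1^t* *m P1 = 1%:M -> P1 *m P1^t* + P2 *m P2^t* = 1%:M -> D \in unitmx ->
  Pperp (P1 *m D) = P2 *m P2^t*.
Proof.
move=> P1tP1 P_sum uD; rewrite /Pperp /Ppar tpinv_svd // -mulmxA (mulmxA D).
by rewrite mulmxV // mul1mx -P_sum addrC addKr.
Qed.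

Lemma Pperp_isometry {m n p} (P : 'M[C]_(m, n)) (Y : 'M[C]_(n, p)) :
  P^t* *m P = 1%:M -> P *m Pperp Y *m P^t* = P *m P^t* - Ppar (P *m Y).
Proof.
by move=> PtP; rewrite Ppar_isometry // /Pperp mulmxBr mulmxBl mulmx1.
Qed.

Lemma wPperp_adj {m n} (X : 'M[C]_(m, n)) : wPperp X = Pperp (X^t*).
Proof. by rewrite /wPperp /Pperp /Ppar /tpinv /wpinv trmxCK mulmxA. Qed.

Lemma proj_decomposition {m n} (X : 'M[C]_(m, n)) (y : 'cV[C]_m) :
  X *m (tpinv X *m y) + Pperp X *m y = y.
Proof. by rewrite /Pperp /Ppar mulmxBl mul1mx mulmxA addrC subrK. Qed.

End PseudoInverse.

Section Blocks.
Context {C : numClosedFieldType}.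

Lemma unitary_row_mx_blocks {m a b} (P1 : 'M[C]_(m, a)) (P2 : 'M[C]_(m, b)) :
  row_mx P1 P2 \is unitarymx -> (row_mx P1 P2)^t* \is unitarymx ->
  [/\ P1^t* *m P1 = 1%:M, P2^t* *m P2 = 1%:M, P1^t* *m P2 = 0, P2^t* *m P1 = 0 &
      P1 *m P1^t* + P2 *m P2^t* = 1%:M].
Proof.
move=> /unitarymxP + /unitarymxP.
rewrite trmxCK adjmx_row_mx mul_row_col mul_col_row (scalar_mx_block a b) => P_sum.
by case/eq_block_mx.
Qed.

Lemma tall_svd_blocks {m n} {X : 'M[C]_(m, n)} {Pp Po s Psi} :
  tall_svd X Pp Po s Psi ->
  [/\ Pp^t* *m Pp = 1%:M, Po^t* *m Po = 1%:M, Pp^t* *m Po = 0, Po^t* *m Pp = 0 &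
      Pp *m Pp^t* + Po *m Po^t* = 1%:M].
Proof. by case=> _ [uP uPt] _ _ _; apply: unitary_row_mx_blocks. Qed.

Lemma tall_svd_factor {m n} {X : 'M[C]_(m, n)} {Pp Po s Psi} :
  tall_svd X Pp Po s Psi -> \rank X = n ->
  exists2 D : 'M[C]_n, X = Pp *m D & D \in unitmx.
Proof.
case=> _ _ _ _ ->; rewrite mul_row_col mulmx0 addr0 -mulmxA => rkX.
exists (diag_mx s *m Psi^t*) => //; rewrite -row_free_unit /row_free eqn_leq.
by rewrite rank_leq_col -{1}rkX mxrankM_maxr.
Qed.

Lemma gram_push_through {a b c d} (W00 : 'M[C]_(a, c)) (W01 : 'M[C]_(a, b))
    (W10 : 'M[C]_(d, c)) :
  W00^t* *m W00 + W10^t* *m W10 = 1%:M -> W00 *m W00^t* + W01 *m W01^t* = 1%:M ->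
  W01 *m W01^t* \in unitmx -> W10^t* *m W10 \in unitmx ->
  invmx (W10^t* *m W10) *m W00^t* = W00^t* *m invmx (W01 *m W01^t*).
Proof.
move=> col_sum row_sum uS uT.
(* both sides equal W00^H - W00^H W00 W00^H *)
have push : W10^t* *m W10 *m W00^t* = W00^t* *m (W01 *m W01^t*).
  rewrite -(addKr (W00^t* *m W00) (W10^t* *m W10)) -(addKr (W00 *m W00^t*) (W01 *m W01^t*)).
  by rewrite col_sum row_sum mulmxDl mulmxDr mul1mx mulmx1 mulNmx mulmxN !mulmxA.
by rewrite -{1}(mulmxK uS (W00^t*)) -push -(mulmxA (W10^t* *m W10)) mulKmx.
Qed.

End Blocks.

Lemma colmat_mul {C : numClosedFieldType} {N p} k (A : 'M[C]_(p, N))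
    (f : nat -> 'cV[C]_N) :
  colmat k (fun j => A *m f j) = A *m colmat k f.
Proof. by apply/matrixP => i j; rewrite !mxE; apply: eq_bigr => l _; rewrite !mxE. Qed.

Lemma colmat_delta {C : numClosedFieldType} {N k} (f : nat -> 'cV[C]_N) {tau}
    (lt_tau : (tau < k)%N) :
  f tau = colmat k f *m delta_mx (Ordinal lt_tau) 0.
Proof. by rewrite -colE; apply/matrixP => i j; rewrite !mxE (ord1 j). Qed.

Section VbarCoordinates.
Context {C : numClosedFieldType} {N a c : nat}.
Context {V : 'M[C]_N} {P1 : 'M[C]_(N, a)} {P2 : 'M[C]_(N, N - a)}
  {R1 : 'M[C]_(N, c)} {R2 : 'M[C]_(N, N - c)} {D : 'M[C]_a} {E : 'M[C]_c}
  {Q B : 'M[C]_(N, a)} {M H : 'M[C]_(N, c)}.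
Hypotheses (VVt : V *m V^t* = 1%:M) (VtV : V^t* *m V = 1%:M).
Hypotheses (P1tP1 : P1^t* *m P1 = 1%:M) (P2tP2 : P2^t* *m P2 = 1%:M)
  (P1tP2 : P1^t* *m P2 = 0) (P2tP1 : P2^t* *m P1 = 0)
  (P_sum : P1 *m P1^t* + P2 *m P2^t* = 1%:M).
Hypotheses (R1tR1 : R1^t* *m R1 = 1%:M) (R2tR2 : R2^t* *m R2 = 1%:M)
  (R1tR2 : R1^t* *m R2 = 0) (R2tR1 : R2^t* *m R1 = 0)
  (R_sum : R1 *m R1^t* + R2 *m R2^t* = 1%:M).
Hypotheses (D_unit : D \in unitmx) (E_unit : E \in unitmx).
Hypotheses (Q_svd : Q = P1 *m D) (M_svd : M = R1 *m E).
Hypotheses (B_def : B = V^t* *m Q) (H_def : H = V *m M).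
Hypotheses (MB_full : \rank (Pperp M *m B) = a) (QH_full : \rank (Pperp Q *m H) = c).

Let W00 := P1^t* *m V *m R1.
Let W01 := P1^t* *m V *m R2.
Let W10 := P2^t* *m V *m R1.
Let S := W01 *m W01^t*.
Let T := W10^t* *m W10.
Let W11bar := - (W10 *m W00^t* *m invmx S *m W01).
Let Vb := Vbar Q B M H P1 P2 R1 R2.

Let tpinv_Q : tpinv Q = invmx D *m P1^t*.
Proof. by rewrite Q_svd tpinv_svd. Qed.

Let tpinv_M : tpinv M = invmx E *m R1^t*.
Proof. by rewrite M_svd tpinv_svd. Qed.

Let Pperp_Q : Pperp Q = P2 *m P2^t*.
Proof. by rewrite Q_svd (Pperp_svd _ _ _ P1tP1 P_sum). Qed.

Let Pperp_M : Pperp M = R2 *m R2^t*.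
Proof. by rewrite M_svd (Pperp_svd _ _ _ R1tR1 R_sum). Qed.

Let Pperp_M_B : Pperp M *m B = R2 *m W01^t* *m D.
Proof. by rewrite Pperp_M B_def Q_svd /W01 !adjmxM trmxCK !mulmxA. Qed.

Let Pperp_Q_H : Pperp Q *m H = P2 *m W10 *m E.
Proof. by rewrite Pperp_Q H_def M_svd /W10 !mulmxA. Qed.

Let S_unit : S \in unitmx.
Proof.
move: MB_full; rewrite Pperp_M_B mxrankMfree ?row_free_unit // mxrank_isometry //.
by move=> /unitmx_gram; rewrite trmxCK.
Qed.

Let T_unit : T \in unitmx.
Proof.
move: QH_full; rewrite Pperp_Q_H mxrankMfree ?row_free_unit // mxrank_isometry //.
exact: unitmx_gram.
Qed.

Let invS_herm : (invmx S)^t* = invmx S.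
Proof. by rewrite adjmx_inv /S adjmxM trmxCK. Qed.

Let invT_herm : (invmx T)^t* = invmx T.
Proof. by rewrite adjmx_inv /T adjmxM trmxCK. Qed.

Let W_col_sum : W00^t* *m W00 + W10^t* *m W10 = 1%:M.
Proof.
have <- : R1^t* *m V^t* *m (P1 *m P1^t* + P2 *m P2^t*) *m V *m R1 = 1%:M.
  by rewrite P_sum mulmx1 (mulmx_cancelr VtV) R1tR1.
by rewrite mulmxDr !mulmxDl /W00 /W10 !adjmxM !trmxCK !mulmxA.
Qed.

Let W_row_sum : W00 *m W00^t* + W01 *m W01^t* = 1%:M.
Proof.
have <- : P1^t* *m V *m (R1 *m R1^t* + R2 *m R2^t*) *m V^t* *m P1 = 1%:M.
  by rewrite R_sum mulmx1 (mulmx_cancelr VVt) P1tP1.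
by rewrite mulmxDr !mulmxDl /W00 /W01 !adjmxM trmxCK !mulmxA.
Qed.

Let push : invmx T *m W00^t* = W00^t* *m invmx S.
Proof. exact: gram_push_through W_col_sum W_row_sum S_unit T_unit. Qed.

Let V00_W : V00 Q B P1 R1 = W00.
Proof.
rewrite /V00 tpinv_Q (mulmx_cancelr P1tP1) B_def Q_svd !adjmxM trmxCK !mulmxA.
by rewrite -adjmxM mulmxV // adjmx1 mul1mx.
Qed.

Let V01_W : V01 Q B P1 R2 = W01.
Proof.
rewrite /V01 tpinv_Q (mulmx_cancelr P1tP1) B_def Q_svd !adjmxM trmxCK !mulmxA.
by rewrite -adjmxM mulmxV // adjmx1 mul1mx.
Qed.

Let V10_W : V10 M H P2 R1 = W10.
Proof.
by rewrite /V10 tpinv_M H_def M_svd !mulmxA (mulmxK E_unit) (mulmx_cancelr R1tR1).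
Qed.

Let V11bar_W : V11bar Q B M H P1 P2 R1 R2 = W11bar.
Proof.
rewrite /V11bar V00_W V01_W V10_W /wpinv -/S !adjmxM invS_herm.
by rewrite /W11bar /W00 /W01 /W10 !adjmxM !trmxCK !mulmxA.
Qed.

Let Vbar_blocks : Vb = row_mx P1 P2 *m block_mx W00 W01 W10 W11bar *m (row_mx R1 R2)^t*.
Proof. by rewrite /Vb /Vbar V00_W V01_W V10_W V11bar_W. Qed.

Let P1t_Vbar : P1^t* *m Vb = P1^t* *m V.
Proof.
rewrite Vbar_blocks adjmx_row_mx !mulmxA mul_mx_row P1tP1 P1tP2 mul_row_block.
rewrite !mul1mx !mul0mx !addr0 mul_row_col.
by rewrite -[RHS]mulmx1 -R_sum mulmxDr /W00 /W01 !mulmxA.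
Qed.

Let P2t_Vbar : P2^t* *m Vb = W10 *m R1^t* + W11bar *m R2^t*.
Proof.
rewrite Vbar_blocks adjmx_row_mx !mulmxA mul_mx_row P2tP1 P2tP2 mul_row_block.
by rewrite !mul1mx !mul0mx !add0r mul_row_col.
Qed.

Let Vbar_R1 : Vb *m R1 = V *m R1.
Proof.
rewrite Vbar_blocks adjmx_row_mx -mulmxA mul_col_mx R1tR1 R2tR1 -mulmxA mul_block_col.
rewrite !mulmx1 !mulmx0 !addr0 mul_row_col.
by rewrite -[RHS]mul1mx -P_sum mulmxDl /W00 /W10 !mulmxA.
Qed.

Let Vbar_R2 : Vb *m R2 = P1 *m W01 + P2 *m W11bar.
Proof.
rewrite Vbar_blocks adjmx_row_mx -mulmxA mul_col_mx R1tR2 R2tR2 -mulmxA mul_block_col.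
by rewrite !mulmx1 !mulmx0 !add0r mul_row_col.
Qed.

Let B_gram m (Y : 'M[C]_(m, N)) :
  Y *m B *m invmx (B^t* *m Pperp M *m B) *m B^t* = Y *m V^t* *m P1 *m invmx S *m P1^t* *m V.
Proof.
have -> : B^t* *m Pperp M *m B = D^t* *m S *m D.
  by rewrite Pperp_M B_def Q_svd /S /W01 !adjmxM !trmxCK !mulmxA.
rewrite (invmx_congruence D_unit S_unit) B_def Q_svd !adjmxM trmxCK !mulmxA.
by rewrite (mulmxK D_unit) mulmxKV ?unitmx_adj.
Qed.

Let H_gram m (Y : 'M[C]_(m, N)) :
  Y *m H *m invmx (H^t* *m Pperp Q *m H) *m H^t* = Y *m V *m R1 *m invmx T *m R1^t* *m V^t*.
Proof.
have -> : H^t* *m Pperp Q *m H = E^t* *m T *m E.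
  by rewrite Pperp_Q H_def M_svd /T /W10 !adjmxM !trmxCK !mulmxA.
rewrite (invmx_congruence E_unit T_unit) H_def M_svd !adjmxM !mulmxA.
by rewrite (mulmxK E_unit) mulmxKV ?unitmx_adj.
Qed.

Let P2t_H_Gamma : P2^t* *m H *m Gamma M B = W10 *m R1^t* + W11bar *m R2^t*.
Proof.
rewrite /Gamma tpinv_M mulmxBr !mulmxA B_gram Pperp_M H_def M_svd !mulmxA (mulmxK E_unit).
by rewrite /W11bar /W10 /W00 /W01 mulNmx !adjmxM !trmxCK !mulmxA.
Qed.

Let R2t_B_Delta :
  R2^t* *m B *m Delta Q H = W01^t* *m P1^t* - W01^t* *m W00 *m invmx T *m W10^t* *m P2^t*.
Proof.
rewrite /Delta tpinv_Q mulmxBr !mulmxA H_gram Pperp_Q B_def Q_svd !mulmxA (mulmxK D_unit).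
by rewrite /W10 /W00 /W01 !adjmxM !trmxCK !mulmxA.
Qed.

Let Vbar_adj_Q : Vb^t* *m Q = B.
Proof.
rewrite B_def Q_svd !mulmxA; congr (_ *m D).
by rewrite -[LHS]trmxCK adjmxM trmxCK P1t_Vbar adjmxM trmxCK.
Qed.

Let Vbar_M : Vb *m M = H.
Proof. by rewrite H_def M_svd !mulmxA Vbar_R1. Qed.

Let Vbar_adj_P2 : Vb^t* *m P2 = (Gamma M B)^t* *m H^t* *m P2.
Proof.
have <- : (P2^t* *m Vb)^t* = Vb^t* *m P2 by rewrite adjmxM trmxCK.
by rewrite P2t_Vbar -P2t_H_Gamma !adjmxM trmxCK mulmxA.
Qed.

Let Vbar_R2_Delta : Vb *m R2 = (Delta Q H)^t* *m B^t* *m R2.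
Proof.
have -> : (Delta Q H)^t* *m B^t* *m R2 = (R2^t* *m B *m Delta Q H)^t*.
  by rewrite !adjmxM trmxCK !mulmxA.
rewrite Vbar_R2 R2t_B_Delta adjmxB !adjmxM !trmxCK invT_herm /W11bar mulmxN.
by rewrite -(mulmxA W10 (W00^t*)) -push /W00 /W01 /W10 !adjmxM !trmxCK !mulmxA.
Qed.

Let proj_V01 : R2 *m wPperp (V01 Q B P1 R2) *m R2^t* = Pperp M - Ppar (Pperp M *m B).
Proof.
rewrite V01_W wPperp_adj Pperp_isometry // -Pperp_M Pperp_M_B Ppar_mulmx_unit //.
by rewrite adjmxM trmxCK !mulmxA (mulmx_cancelr R2tR2).
Qed.

Let proj_V10 : P2 *m Pperp (V10 M H P2 R1) *m P2^t* = Pperp Q - Ppar (Pperp Q *m H).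
Proof.
rewrite V10_W Pperp_isometry // -Pperp_Q Pperp_Q_H Ppar_mulmx_unit //.
by rewrite adjmxM mulmxA (mulmx_cancelr P2tP2).
Qed.

Lemma Vbar_constraints :
  [/\ Vb^t* *m Q = B, Vb *m M = H, Vb^t* *m P2 = (Gamma M B)^t* *m H^t* *m P2,
      Vb *m R2 = (Delta Q H)^t* *m B^t* *m R2 &
      R2 *m wPperp (V01 Q B P1 R2) *m R2^t* = Pperp M - Ppar (Pperp M *m B) /\
      P2 *m Pperp (V10 M H P2 R1) *m P2^t* = Pperp Q - Ppar (Pperp Q *m H)].
Proof.
exact: And5 Vbar_adj_Q Vbar_M Vbar_adj_P2 Vbar_R2_Delta (conj proj_V01 proj_V10).
Qed.

End VbarCoordinates.

Theorem lemma4 (C : numClosedFieldType) (Md N : nat)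
  (A : 'M[C]_(Md, N)) (U : 'M[C]_Md) (s : 'rV[C]_Md) (V : 'M[C]_N)
  (x : 'cV[C]_N) (w : 'cV[C]_Md) (sigma2 : C) (gam vBA : nat -> C)
  (eta : nat -> C -> C) (q m : nat -> 'cV[C]_N)
  (t t' : nat)
  (PQp : 'M[C]_(N, t')) (PQo : 'M[C]_(N, N - t')) (sQ : 'rV[C]_t') (PsiQ : 'M[C]_t')
  (PMp : 'M[C]_(N, t)) (PMo : 'M[C]_(N, N - t)) (sM : 'rV[C]_t) (PsiM : 'M[C]_t) :
  let b k := V ^t* *m q k in
  let h k := V *m m k in
  let Qs k := colmat k q in
  let Bs k := colmat k b in
  let Ms k := colmat k m in
  let Hs k := colmat k h in
  meas_svd A U s V ->
  EP_recursion U s V x w sigma2 gam vBA eta q m ->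
  (0 < t)%N -> (t' = t \/ t' = t.+1) -> (t + t' < N)%N ->
  \rank (Qs t') = t' -> \rank (Ms t) = t ->
  (* full column rank of the matrices whose P^par appears below *)
  \rank (Pperp (Ms t) *m Bs t') = t' -> \rank (Pperp (Qs t') *m Hs t) = t ->
  tall_svd (Qs t') PQp PQo sQ PsiQ -> tall_svd (Ms t) PMp PMo sM PsiM ->
  let Vb := Vbar (Qs t') (Bs t') (Ms t) (Hs t) PQp PQo PMp PMo in
  let beta := tpinv (Qs t) *m q t in
  let alpha := tpinv (Ms t) *m m t in
  let qperp := Pperp (Qs t) *m q t in
  let mperp := Pperp (Ms t) *m m t in
  let eps1 := (Gamma (Ms t) (Bs t)) ^t* *m (Hs t) ^t* *m qperp in
  let eps2 := (Delta (Qs t.+1) (Hs t)) ^t* *m (Bs t.+1) ^t* *m mperp in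
  [/\ forall tau, (tau < t')%N -> Vb ^t* *m q tau = b tau,
      t' = t -> Vb ^t* *m q t = Bs t *m beta + eps1,
      t' = t.+1 -> Vb *m m t = Hs t *m alpha + eps2,
      PMo *m wPperp (V01 (Qs t') (Bs t') PQp PMo) *m PMo ^t*
        = Pperp (Ms t) - Ppar (Pperp (Ms t) *m Bs t') &
      PQo *m Pperp (V10 (Ms t) (Hs t) PQo PMp) *m PQo ^t*
        = Pperp (Qs t') - Ppar (Pperp (Qs t') *m Hs t)].
Proof.
move=> b h Qs Bs Ms Hs [_ _ V_unitary _ _] _ _ _ _ rkQ rkM rkMB rkQH svdQ svdM.
move=> Vb beta alpha qperp mperp eps1 eps2.
have VVt : V *m V^t* = 1%:M by apply/unitarymxP.
have [P1tP1 P2tP2 P1tP2 P2tP1 P_sum] := tall_svd_blocks svdQ.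
have [R1tR1 R2tR2 R1tR2 R2tR1 R_sum] := tall_svd_blocks svdM.
have [DQ Q_svd DQ_unit] := tall_svd_factor svdQ rkQ.
have [DM M_svd DM_unit] := tall_svd_factor svdM rkM.
have B_def : Bs t' = V^t* *m Qs t' := colmat_mul _ _ _.
have H_def : Hs t = V *m Ms t := colmat_mul _ _ _.
have [VbQ VbM VbP2 VbR2 [projV01 projV10]] :=
  Vbar_constraints VVt (mulmx1C VVt) P1tP1 P2tP2 P1tP2 P2tP1 P_sum
    R1tR1 R2tR2 R1tR2 R2tR1 R_sum DQ_unit DM_unit Q_svd M_svd B_def H_def rkMB rkQH.
have PperpQ : Pperp (Qs t') = PQo *m PQo^t* by rewrite Q_svd (Pperp_svd _ _ _ P1tP1 P_sum).
have PperpM : Pperp (Ms t) = PMo *m PMo^t* by rewrite M_svd (Pperp_svd _ _ _ R1tR1 R_sum).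
split=> //.
- move=> tau lt_tau.
  by rewrite /b (colmat_delta q lt_tau) mulmxA VbQ B_def mulmxA.
- move=> t't; subst t'.
  rewrite -{1}(proj_decomposition (Qs t) (q t)) mulmxDr mulmxA VbQ.
  by rewrite /eps1 /qperp PperpQ !mulmxA VbP2.
- move=> t't; subst t'.
  rewrite -{1}(proj_decomposition (Ms t) (m t)) mulmxDr mulmxA VbM.
  by rewrite /eps2 /mperp PperpM !mulmxA VbR2.
Qed.
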